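(* For a weakly coupled POMDP and horizon $T$, the componentwise inequalities (VI$^m$) are valid for MILP (IP), for MILP (LB) and for the nonlinear program (UB): every feasible solution of each of these programs can be extended by nonnegative variables $\tau^{t,m}_{s'a'soa}$ satisfying (VI$^m$) for all $m$. Moreover, there exist instances and feasible solutions of the linear relaxation of (IP) that do not satisfy (VI$^m$) (for any choice of the additional variables).
   Context: Weakly coupled POMDP: components $m\in[M]$, each a POMDP $(\mathcal X_S^m,\mathcal X_O^m,\mathcal X_A^m,\mathfrak p^m,\mathbf r^m)$ (initial $p^m(s)$, emissions $p^m(o|s)$, transitions $p^m(s'|s,a)$, reward $r^m$); $\mathbf D^m:\mathcal X_A^m\to\mathbb R^q$, $\mathbf b\in\mathbb R^q_{\ge0}$. For a POMDP, $\mathcal Q(T,\mathcal X_S,\mathcal X_O,\mathcal X_A,\mathfrak p)$: $(\tau,\delta)$ with $\delta^t_{a|o}\ge0$, $\sum_a\delta^t_{a|o}=1$, nonnegative $\tau$ with (i) $\tau^1_s=p(s)$; (ii) $\sum_{o,a}\tau^t_{soa}=\nu^t_s$, $\nu^1_s=\tau^1_s$, $\nu^t_s=\sum_{s'',a''}\tau^{t-1}_{s''a''s}$; (iii) $\sum_{\bar s}\tau^t_{sa\bar s}=\sum_o\tau^t_{soa}$; (iv) $\tau^t_{sas'}=p(s'|s,a)\sum_{\bar s}\tau^t_{sa\bar s}$; (v) $\tau^t_{soa}=\delta^t_{a|o}p(o|s)\sum_{o',a'}\tau^t_{so'a'}$. $\mathcal Q^{\mathrm d}$: same with $\delta^t_{a|o}\in\{0,1\}$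 and (v) replaced by $\tau^t_{soa}\le p(o|s)\nu^t_s$, $\tau^t_{soa}\le\delta^t_{a|o}$, $\tau^t_{soa}\ge p(o|s)\nu^t_s+\delta^t_{a|o}-1$. (IP): maximize $\sum_t\sum_m\sum_{s,a,s'}r^m(s,a,s')\tau^{t,m}_{sas'}$ s.t. $(\tau^m,\delta^m)\in\mathcal Q^{\mathrm d}(T,\mathcal X_S^m,\mathcal X_O^m,\mathcal X_A^m,\mathfrak p^m)$, $\tau^{t,m}_a=\sum_{s,o}\tau^{t,m}_{soa}$, $\sum_m\sum_a\mathbf D^m(a)\tau^{t,m}_a\le\mathbf b$ ($t\in[T]$); its linear relaxation allows $\delta^{t,m}_{a|o}\in[0,1]$. (UB): same with $\mathcal Q$ instead of $\mathcal Q^{\mathrm d}$. (LB): same objective, $(\tau^m,\delta^m)\in\mathcal Q^{\mathrm d}$ for all $m$, and $\sum_m\sum_a\mathbf D^m(a)\delta^{t,m}_{a|o^m}\le\mathbf b$ for all $\mathbf o\in\prod_m\mathcal X_O^m$, $t\in[T]$. (VI$^m$): for $t\in\{2,\dots,T\}$ and all $s,s'\in\mathcal X_S^m$, $o\in\mathcal X_O^m$, $a,a'\in\mathcal X_A^m$: $\sum_{s',a'}\tau^{t,m}_{s'a'soa}=\tau^{t,m}_{soa}$; $\sum_a\tau^{t,m}_{s'a'soa}=p^m(o|s)p^m(s|s',a')\tau^{t-1,m}_{s'a'}$ with $\tau^{t-1,m}_{s'a'}:=\sum_{\bar s}\tau^{t-1,m}_{s'a'\bar s}$; $\tau^{t,m}_{s'a'soa}=p^m(s|s',a',o)\sum_{\bar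 s}\tau^{t,m}_{s'a'\bar soa}$, where $p^m(s|s',a',o)=p^m(o|s)p^m(s|s',a')/\sum_{\bar s}p^m(o|\bar s)p^m(\bar s|s',a')$. *)

From HB Require Import structures.
From mathcomp Require Import all_boot all_order all_algebra.
Set Implicit Arguments. Unset Strict Implicit. Unset Printing Implicit Defensive.
Import Order.TTheory GRing.Theory Num.Theory.
Local Open Scope ring_scope.

Record pomdp (R : realFieldType) := Pomdp {
  St : finType; Ob : finType; Ac : finType;
  p_init : St -> R;
  p_obs : St -> Ob -> R;             (* p_obs s o   = p(o|s)     *)
  p_tr : St -> Ac -> St -> R;        (* p_tr s a s' = p(s'|s,a)  *)
  rew : St -> Ac -> St -> R;
  p_init_ge0 : forall s, 0 <= p_init s;
  p_init_sum : \sum_(s : St) p_init s = 1;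
  p_obs_ge0 : forall s o, 0 <= p_obs s o;
  p_obs_sum : forall s, \sum_(o : Ob) p_obs s o = 1;
  p_tr_ge0 : forall s a s', 0 <= p_tr s a s';
  p_tr_sum : forall s a, \sum_(s' : St) p_tr s a s' = 1 }.

(* Variable families, indexed by time t : nat (times 1..T are used). *)
Definition soaT (R : realFieldType) (P : pomdp R) :=
  nat -> St P -> Ob P -> Ac P -> R.
Definition sasT (R : realFieldType) (P : pomdp R) :=
  nat -> St P -> Ac P -> St P -> R.
Definition polT (R : realFieldType) (P : pomdp R) :=
  nat -> Ob P -> Ac P -> R.
Definition viT (R : realFieldType) (P : pomdp R) :=
  nat -> St P -> Ac P -> St P -> Ob P -> Ac P -> R.

Section OnePOMDP.
Variables (R : realFieldType) (P : pomdp R) (T : nat).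

Definition nu (tsas : sasT P) (t : nat) (s : St P) : R :=
  if t == 1%N then p_init s
  else \sum_(s'' : St P) \sum_(a'' : Ac P) tsas t.-1 s'' a'' s.

(* nonnegativity, simplex constraints on delta, and (i)-(iv) *)
Definition Q_common (tso : soaT P) (tsas : sasT P) (dl : polT P) : Prop :=
  forall t, (1 <= t <= T)%N ->
    (forall s o a, 0 <= tso t s o a) /\
    (forall s a s', 0 <= tsas t s a s') /\
    (forall o a, 0 <= dl t o a) /\
    (forall o, \sum_(a : Ac P) dl t o a = 1) /\
    (forall s, \sum_(o : Ob P) \sum_(a : Ac P) tso t s o a = nu tsas t s) /\
    (forall s a, \sum_(sb : St P) tsas t s a sb = \sum_(o : Ob P) tso t s o a) /\
    (forall s a s', tsas t s a s' = p_tr s a s' * \sum_(sb : St P) tsas t s a sb).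

(* the set Q(T, ...) : nonlinear constraint (v) *)
Definition inQ (tso : soaT P) (tsas : sasT P) (dl : polT P) : Prop :=
  Q_common tso tsas dl /\
  forall t, (1 <= t <= T)%N -> forall s o a,
    tso t s o a = dl t o a * p_obs s o *
                  \sum_(o' : Ob P) \sum_(a' : Ac P) tso t s o' a'.

(* linearized version of (v) *)
Definition lin_v (tso : soaT P) (tsas : sasT P) (dl : polT P) : Prop :=
  forall t, (1 <= t <= T)%N -> forall s o a,
    tso t s o a <= p_obs s o * nu tsas t s /\
    tso t s o a <= dl t o a /\
    p_obs s o * nu tsas t s + dl t o a - 1 <= tso t s o a.

Definition inQd (tso : soaT P) (tsas : sasT P) (dl : polT P) : Prop :=
  Q_common tso tsas dl /\
  (forall t, (1 <= t <= T)%N -> forall o a, dl t o a = 0 \/ dl t o a = 1) /\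
  lin_v tso tsas dl.

Definition inQd_relax (tso : soaT P) (tsas : sasT P) (dl : polT P) : Prop :=
  Q_common tso tsas dl /\
  (forall t, (1 <= t <= T)%N -> forall o a, 0 <= dl t o a <= 1) /\
  lin_v tso tsas dl.

(* p(s|s',a',o) ; if the denominator vanishes, MathComp gives x/0 = 0 *)
Definition p_post (s' : St P) (a' : Ac P) (o : Ob P) (s : St P) : R :=
  p_obs s o * p_tr s' a' s /
  \sum_(sb : St P) p_obs sb o * p_tr s' a' sb.

Definition VI (tso : soaT P) (tsas : sasT P) (x : viT P) : Prop :=
  forall t, (2 <= t <= T)%N ->
    (forall s' a' s o a, 0 <= x t s' a' s o a) /\
    (forall s o a,
       \sum_(s' : St P) \sum_(a' : Ac P) x t s' a' s o a = tso t s o a) /\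
    (forall s' a' s o,
       \sum_(a : Ac P) x t s' a' s o a =
       p_obs s o * p_tr s' a' s * \sum_(sb : St P) tsas t.-1 s' a' sb) /\
    (forall s' a' s o a,
       x t s' a' s o a = p_post s' a' o s * \sum_(sb : St P) x t s' a' sb o a).

End OnePOMDP.

Section Coupled.
Variables (R : realFieldType) (M : nat) (P : 'I_M -> pomdp R) (T q : nat)
  (D : forall m : 'I_M, Ac (P m) -> 'I_q -> R) (b : 'I_q -> R).

Definition linking (tso : forall m, soaT (P m)) : Prop :=
  forall t, (1 <= t <= T)%N -> forall j : 'I_q,
    \sum_(m < M) \sum_(a : Ac (P m))
       @D m a j * (\sum_(s : St (P m)) \sum_(o : Ob (P m)) tso m t s o a) <= b j.

Definition linking_LB (dl : forall m, polT (P m)) : Prop :=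
  forall t, (1 <= t <= T)%N -> forall (o : forall m, Ob (P m)) (j : 'I_q),
    \sum_(m < M) \sum_(a : Ac (P m)) @D m a j * dl m t (o m) a <= b j.

Definition feasible_IP (tso : forall m, soaT (P m)) (tsas : forall m, sasT (P m)) (dl : forall m, polT (P m)) : Prop :=
  (forall m, inQd T (tso m) (tsas m) (dl m)) /\ linking tso.

Definition feasible_IP_relax (tso : forall m, soaT (P m)) (tsas : forall m, sasT (P m)) (dl : forall m, polT (P m)) : Prop :=
  (forall m, inQd_relax T (tso m) (tsas m) (dl m)) /\ linking tso.

Definition feasible_UB (tso : forall m, soaT (P m)) (tsas : forall m, sasT (P m)) (dl : forall m, polT (P m)) : Prop :=
  (forall m, inQ T (tso m) (tsas m) (dl m)) /\ linking tso.

Definition feasible_LB (tso : forall m, soaT (P m)) (tsas : forall m, sasT (P m))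
  (dl : forall m, polT (P m)) : Prop :=
  (forall m, inQd T (tso m) (tsas m) (dl m)) /\ linking_LB dl.

Definition satisfies_VI (tso : forall m, soaT (P m)) (tsas : forall m, sasT (P m)) : Prop :=
  exists x : forall m, viT (P m), forall m, VI T (tso m) (tsas m) (x m).

End Coupled.

From HB Require Import structures.
From mathcomp Require Import all_boot all_order all_algebra.
From mathcomp Require Import zify ring lra.
Set Implicit Arguments. Unset Strict Implicit. Unset Printing Implicit Defensive.
Import Order.TTheory GRing.Theory Num.Theory.
Local Open Scope ring_scope.

(* Given
   the product form and constraints (i)-(iv), the explicit extension
       tau^t_{s'a'soa} = delta^t_{a|o} p(o|s) p(s|s',a') tau^{t-1}_{s'a'}
   satisfies (VI^m): summing out a uses sum_a delta = 1, summing out (s',a')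
   uses (iv) and the definition of nu, and the posterior equation is the
   defining identity of p(s|s',a',o).

   For the linear relaxation, (VI) forces tau^t_{soa} to be a mixture of the
   posteriors p(.|s',a',o).  We take one component with two states, a single
   uninformative observation and uniform transitions, so that every posterior
   is uniform, and a fractional solution whose action at time 2 copies the
   hidden state: it is feasible for the relaxation but not uniform in s. *)

Section ProductForm.
Variables (R : realFieldType) (P : pomdp R) (T : nat).
Implicit Types (tso : soaT P) (tsas : sasT P) (dl : polT P).

Definition product_form tso tsas dl : Prop :=
  forall t, (1 <= t <= T)%N -> forall s o a,
    tso t s o a = dl t o a * p_obs s o * nu tsas t s.

(* In Q, constraint (ii) identifies the normalizing sum in (v) with nu. *)
Lemma inQ_product_form tso tsas dl :
  inQ T tso tsas dl -> product_form tso tsas dl.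
Proof.
move=> [HQ Hv] t t_in s o a.
have [_ [_ [_ [_ [nu_eq _]]]]] := HQ t t_in.
by rewrite -nu_eq; apply: Hv.
Qed.

Lemma mccormick_binary (x y d : R) :
  d = 0 \/ d = 1 -> 0 <= x -> x <= y -> x <= d -> y + d - 1 <= x -> x = d * y.
Proof. by case=> -> *; rewrite ?mul0r ?mul1r; lra. Qed.

Lemma inQd_product_form tso tsas dl :
  inQd T tso tsas dl -> product_form tso tsas dl.
Proof.
move=> [HQ [binary mccormick]] t t_in s o a.
have [tso_ge0 _] := HQ t t_in.
have [le_py [le_d ge_sum]] := mccormick t t_in s o a.
by rewrite -mulrA; apply: mccormick_binary (binary t t_in o a) (tso_ge0 s o a) _ _ _.
Qed.

End ProductForm.

Section Posterior.
Variables (R : realFieldType) (P : pomdp R).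

(* p(s|s',a',o) times its normalizer is the joint weight p(o|s) p(s|s',a');
   this also holds when the normalizer vanishes, since then so does every
   (nonnegative) summand. *)
Lemma p_post_normalizer (s' : St P) (a' : Ac P) (o : Ob P) (s : St P) :
  p_post s' a' o s * \sum_(sb : St P) p_obs sb o * p_tr s' a' sb =
  p_obs s o * p_tr s' a' s.
Proof.
set Z := \sum_(sb : St P) _.
have weight_ge0 sb : 0 <= p_obs sb o * p_tr s' a' sb.
  by rewrite mulr_ge0 ?p_obs_ge0 ?p_tr_ge0.
have [Z0 | Zn0] := eqVneq Z 0.
  by rewrite Z0 mulr0 (psumr_eq0P (fun i _ => weight_ge0 i) Z0).
by rewrite /p_post -/Z mulfVK.
Qed.

Lemma nu_inflow (tsas : sasT P) (t : nat) (s : St P) : (1 < t)%N ->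
  nu tsas t s = \sum_(s'' : St P) \sum_(a'' : Ac P) tsas t.-1 s'' a'' s.
Proof. by move=> t_gt1; rewrite /nu gtn_eqF. Qed.

End Posterior.

Section Extension.
Variables (R : realFieldType) (P : pomdp R) (T : nat).
Variables (tso : soaT P) (tsas : sasT P) (dl : polT P).
Hypothesis (HQ : Q_common T tso tsas dl) (Hform : product_form T tso tsas dl).

Definition vi_extension : viT P := fun t s' a' s o a =>
  dl t o a * p_obs s o * p_tr s' a' s * \sum_(sb : St P) tsas t.-1 s' a' sb.

Lemma vi_window t : (2 <= t <= T)%N -> (1 <= t <= T)%N /\ (1 <= t.-1 <= T)%N.
Proof. by move=> /andP[]; lia. Qed.

Lemma vi_extension_ge0 t s' a' s o a :
  (2 <= t <= T)%N -> 0 <= vi_extension t s' a' s o a.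
Proof.
move=> /vi_window[t_in tm_in].
have [_ [_ [dl_ge0 _]]] := HQ t_in.
have [_ [tsas_ge0 _]] := HQ tm_in.
by rewrite !mulr_ge0 ?p_obs_ge0 ?p_tr_ge0 ?sumr_ge0.
Qed.

Lemma vi_extension_marginal t s o a : (2 <= t <= T)%N ->
  \sum_(s' : St P) \sum_(a' : Ac P) vi_extension t s' a' s o a = tso t s o a.
Proof.
move=> /[dup] /vi_window[t_in tm_in] /andP[t_gt1 _].
have [_ [_ [_ [_ [_ [_ transition]]]]]] := HQ tm_in.
rewrite Hform // nu_inflow // !mulr_sumr.
apply: eq_bigr => s' _; rewrite mulr_sumr; apply: eq_bigr => a' _.
by rewrite transition /vi_extension -!mulrA.
Qed.

(* Summing out the action uses that delta^t_{.|o} is a distribution. *)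
Lemma vi_extension_action_sum t s' a' s o : (2 <= t <= T)%N ->
  \sum_(a : Ac P) vi_extension t s' a' s o a =
  p_obs s o * p_tr s' a' s * \sum_(sb : St P) tsas t.-1 s' a' sb.
Proof.
move=> /vi_window[t_in _].
have [_ [_ [_ [dl_sum _]]]] := HQ t_in.
rewrite /vi_extension; under eq_bigr => a _ do rewrite -!mulrA.
by rewrite -mulr_suml dl_sum mul1r !mulrA.
Qed.

Lemma vi_extension_posterior t s' a' s o a :
  vi_extension t s' a' s o a =
  p_post s' a' o s * \sum_(sb : St P) vi_extension t s' a' sb o a.
Proof.
have -> : \sum_(sb : St P) vi_extension t s' a' sb o a =
          dl t o a * (\sum_(sb : St P) tsas t.-1 s' a' sb) *
          \sum_(sb : St P) p_obs sb o * p_tr s' a' sb.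
  by rewrite mulr_sumr; apply: eq_bigr => sb _; rewrite /vi_extension; ring.
rewrite mulrCA p_post_normalizer /vi_extension; ring.
Qed.

Lemma VI_vi_extension : VI T tso tsas vi_extension.
Proof.
move=> t t_in; split; [|split; [|split]] => *.
- exact: vi_extension_ge0.
- exact: vi_extension_marginal.
- exact: vi_extension_action_sum.
- exact: vi_extension_posterior.
Qed.

End Extension.

Lemma feasible_componentwise (R : realFieldType) (M : nat)
    (P : 'I_M -> pomdp R) (T q : nat) (D : forall m : 'I_M, Ac (P m) -> 'I_q -> R)
    (b : 'I_q -> R) (tso : forall m, soaT (P m)) (tsas : forall m, sasT (P m))
    (dl : forall m, polT (P m)) :
  feasible_IP T D b tso tsas dl \/ feasible_LB T D b tso tsas dl \/
  feasible_UB T D b tso tsas dl ->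
  forall m, Q_common T (tso m) (tsas m) (dl m) /\
            product_form T (tso m) (tsas m) (dl m).
Proof.
case=> [[HQd _] | [[HQd _] | [HQ _]]] m.
- by split; [case: (HQd m) | apply: inQd_product_form].
- by split; [case: (HQd m) | apply: inQd_product_form].
- by split; [case: (HQ m) | apply: inQ_product_form].
Qed.

Lemma VI_posterior_mixture (R : realFieldType) (P : pomdp R) (T : nat)
    (tso : soaT P) (tsas : sasT P) (x : viT P) t s o a :
  VI T tso tsas x -> (2 <= t <= T)%N ->
  tso t s o a = \sum_(s' : St P) \sum_(a' : Ac P)
                  p_post s' a' o s * \sum_(sb : St P) x t s' a' sb o a.
Proof.
move=> HVI t_in; have [_ [marginal [_ posterior]]] := HVI t t_in.
rewrite -marginal; apply: eq_bigr => s' _; apply: eq_bigr => a' _.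
exact: posterior.
Qed.

Section Counterexample.
Variable R : realFieldType.

Lemma sum_bool_halves : \sum_(s : bool) (2^-1 : R) = 1.
Proof. rewrite big_bool /=; lra. Qed.

Lemma coin_obs_sum (s : bool) : \sum_(o : unit) (1 : R) = 1.
Proof. by rewrite (big_pred1 tt) // => -[]. Qed.

Lemma half_ge0 : 0 <= (2^-1 : R).
Proof. lra. Qed.

Definition coin_pomdp : pomdp R :=
  @Pomdp R bool unit bool (fun _ => 2^-1) (fun _ _ => 1) (fun _ _ _ => 2^-1)
    (fun _ _ _ => 0) (fun _ => half_ge0) sum_bool_halves (fun _ _ => ler01)
    coin_obs_sum (fun _ _ _ => half_ge0) (fun _ _ => sum_bool_halves).

Lemma coin_p_post (s' : bool) (a' : bool) (o : unit) (s : bool) :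
  @p_post R coin_pomdp s' a' o s = 2^-1.
Proof. by rewrite /p_post /= !mul1r sum_bool_halves divr1. Qed.

Definition copy_tso : soaT coin_pomdp := fun t s _ a =>
  if t == 1%N then 4^-1 else if s == a then 2^-1 else 0.
Definition copy_tsas : sasT coin_pomdp := fun t s a _ => 2^-1 * copy_tso t s tt a.
Definition copy_policy : polT coin_pomdp := fun _ _ _ => 2^-1.

Lemma copy_nu t s : (1 <= t <= 2)%N -> nu copy_tsas t s = 2^-1.
Proof.
case/andP; case: t => [|[|[|t]]] //= _ _.
by rewrite /nu /= !big_bool /copy_tsas /copy_tso /=; lra.
Qed.

Lemma copy_horizon t : (1 <= t <= 2)%N -> t = 1%N \/ t = 2%N.
Proof. by case: t => [|[|[|t]]]; auto. Qed.

Lemma copy_common : Q_common 2 copy_tso copy_tsas copy_policy.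
Proof.
move=> t t_in; have nu_t s := copy_nu s t_in.
case: (copy_horizon t_in) => t_eq; rewrite t_eq in nu_t *;
  (split; [|split; [|split; [|split; [|split; [|split]]]]]);
  repeat (let x := fresh in move=> x; try case: x);
  rewrite ?nu_t /copy_tsas /copy_tso /copy_policy /= ?big_bool ?(big_pred1 tt) //=;
  lra.
Qed.

(* The McCormick inequalities hold since p(o|s) nu^t_s = delta = 1/2. *)
Lemma copy_mccormick : lin_v 2 copy_tso copy_tsas copy_policy.
Proof.
move=> t t_in s o a; rewrite copy_nu // /= mul1r /copy_policy.
by case: (copy_horizon t_in) => ->; rewrite /copy_tso /=; case: (s == a); lra.
Qed.

Lemma copy_relax : inQd_relax 2 copy_tso copy_tsas copy_policy.
Proof.
split; [exact: copy_common | split; [|exact: copy_mccormick]].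
by move=> t _ o a; rewrite /copy_policy; apply/andP; split; lra.
Qed.

Lemma copy_not_VI (x : viT coin_pomdp) : ~ VI 2 copy_tso copy_tsas x.
Proof.
move=> HVI.
have uniform s : copy_tso 2 s tt true =
    \sum_(s' : bool) \sum_(a' : bool) 2^-1 * \sum_(sb : bool) x 2%N s' a' sb tt true.
  by rewrite (VI_posterior_mixture s tt true HVI) //; under eq_bigr do
       under eq_bigr do rewrite coin_p_post.
have := uniform false; rewrite -(uniform true) /copy_tso /=; lra.
Qed.

End Counterexample.

Theorem mainTheorem8 (R : realFieldType) :
  (forall (M : nat) (P : 'I_M -> pomdp R) (T q : nat)
     (D : forall m : 'I_M, Ac (P m) -> 'I_q -> R) (b : 'I_q -> R),
     (forall j, 0 <= b j) ->
     forall (tso : forall m, soaT (P m)) (tsas : forall m, sasT (P m))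
            (dl : forall m, polT (P m)),
       feasible_IP T D b tso tsas dl \/
       feasible_LB T D b tso tsas dl \/
       feasible_UB T D b tso tsas dl ->
       satisfies_VI T tso tsas)
  /\
  (exists (M : nat) (P : 'I_M -> pomdp R) (T q : nat)
     (D : forall m : 'I_M, Ac (P m) -> 'I_q -> R) (b : 'I_q -> R)
     (tso : forall m, soaT (P m)) (tsas : forall m, sasT (P m))
     (dl : forall m, polT (P m)),
     (forall j, 0 <= b j) /\
     feasible_IP_relax T D b tso tsas dl /\
     ~ satisfies_VI T tso tsas).
Proof.
split.
- move=> M P T q D b _ tso tsas dl /feasible_componentwise feasible.
  exists (fun m => vi_extension (tsas m) (dl m)) => m.
  by have [HQ Hform] := feasible m; apply: VI_vi_extension.
- exists 1%N, (fun _ => coin_pomdp R), 2%N, 0%N, (fun _ _ _ => 0), (fun _ => 0).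
  exists (fun _ => copy_tso (R:=R)), (fun _ => copy_tsas (R:=R)), (fun _ => copy_policy (R:=R)).
  split; first by case.
  split; first by split=> [_ | t _ []//]; exact: copy_relax.
  by case=> x Hx; apply: (copy_not_VI (Hx ord0)).
Qed.
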